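(* For every finite field $\mathbb{F}_q$, the unit-graph on $\operatorname{Mat}_2(\mathbb{F}_q)$ is strongly regular.
   Context: The unit-graph on $\operatorname{Mat}_2(\mathbb{F}_q)$ is the graph with vertex set $\operatorname{Mat}_2(\mathbb{F}_q)$ in which $A$ and $B$ are adjacent iff $B - A \in \operatorname{GL}_2(\mathbb{F}_q)$. A non-empty, non-complete regular graph is strongly regular with parameters $(n,k,a,c)$ if it has $n$ vertices, is $k$-regular, every pair of distinct adjacent vertices has exactly $a$ common neighbours, and every pair of distinct nonadjacent vertices has exactly $c$ common neighbours. *)

From mathcomp Require Import all_boot all_algebra all_field.
Set Implicit Arguments. Unset Strict Implicit. Unset Printing Implicit Defensive.
Import GRing.Theory.
Local Open Scope ring_scope.

Definition srg_params (T : finType) (e : rel T) (n k a c : nat) : Prop :=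
  [/\ symmetric e, irreflexive e,
      (exists x y, e x y) &
      (exists x y, x != y /\ ~~ e x y)] /\
  [/\ #|T| = n,
      (forall x, #|[set y | e x y]| = k),
      (forall x y, x != y -> e x y -> #|[set z | e x z && e y z]| = a) &
      (forall x y, x != y -> ~~ e x y -> #|[set z | e x z && e y z]| = c)].

Definition strongly_regular (T : finType) (e : rel T) : Prop :=
  exists n k a c : nat, srg_params e n k a c.

Definition unit_graph (F : finFieldType) : rel 'M[F]_2 :=
  fun A B => (B - A) \in unitmx.
Arguments unit_graph F : clear implicits.

(** Translating by a vertex is a graph automorphism, so the number of common
   neighbours of [x] and [y] is the number of units [Z] with [Z - D] a unit,
   where [D = y - x]. Multiplying on both sides by invertible matrices
   preserves this count, so by Gaussian elimination it depends only on the
   rank of [D]. A nonzero 2x2 matrix has rank 2 when it is invertible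
   (adjacent pair) and rank 1 otherwise (nonadjacent pair). *)
From mathcomp Require Import all_boot all_algebra all_field.
Set Implicit Arguments. Unset Strict Implicit. Unset Printing Implicit Defensive.
Import GRing.Theory.
Local Open Scope ring_scope.

Section UnitDifferences.
Variables (F : finFieldType) (n : nat).

Definition unit_shift_count (D : 'M[F]_n) : nat :=
  #|[set Z : 'M[F]_n | (Z \in unitmx) && (Z - D \in unitmx)]|.

Lemma unit_shift_count_equiv (P Q D : 'M[F]_n) :
  P \in unitmx -> Q \in unitmx -> unit_shift_count (P *m D *m Q) = unit_shift_count D.
Proof.
move=> uP uQ.
have inj_PQ : injective (fun Z : 'M[F]_n => P *m Z *m Q).
  move=> X Y /(congr1 (mulmx^~ (invmx Q))); rewrite !mulmxK //.
  by move=> /(congr1 (mulmx (invmx P))); rewrite !mulKmx.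
rewrite /unit_shift_count -(card_preimset _ inj_PQ); apply: eq_card => Z.
by rewrite !inE -mulmxBl -mulmxBr !unitmx_mul uP uQ !andbT.
Qed.

Lemma unit_shift_count_rank (D : 'M[F]_n) :
  unit_shift_count D = unit_shift_count (pid_mx (\rank D)).
Proof.
by rewrite -{1}(mulmx_ebase D) unit_shift_count_equiv ?col_ebase_unit ?row_ebase_unit.
Qed.

Lemma card_unit_translates (x : 'M[F]_n) :
  #|[set y : 'M[F]_n | y - x \in unitmx]| = #|[set y : 'M[F]_n | y \in unitmx]|.
Proof.
rewrite -(card_preimset _ (addIr x)); apply: eq_card => z.
by rewrite !inE addrK.
Qed.

Lemma card_common_unit_translates (x y : 'M[F]_n) :
  #|[set z : 'M[F]_n | (z - x \in unitmx) && (z - y \in unitmx)]|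
    = unit_shift_count (pid_mx (\rank (y - x))).
Proof.
rewrite -unit_shift_count_rank /unit_shift_count -(card_preimset _ (addIr x)).
by apply: eq_card => z; rewrite !inE addrK opprB addrA.
Qed.

Lemma unitmx_sub_sym (A B : 'M[F]_n) : (B - A \in unitmx) = (A - B \in unitmx).
Proof. by rewrite -opprB -scaleN1r unitmxZ // unitrN1. Qed.

End UnitDifferences.

Lemma mxrank2_nonunit (F : fieldType) (D : 'M[F]_2) :
  D != 0 -> D \notin unitmx -> \rank D = 1%N.
Proof.
rewrite -mxrank_eq0 -row_free_unit /row_free.
by have := rank_leq_row D; case: (\rank D) => [|[|[|]]].
Qed.

Theorem corollary3p4 (F : finFieldType) : strongly_regular (unit_graph F).
Proof.
have rank_pid1 : \rank (pid_mx 1 : 'M[F]_2) = 1%N by rewrite rank_pid_mx.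
have diff_neq0 (x y : 'M[F]_2) : x != y -> y - x != 0.
  by rewrite subr_eq0 eq_sym.
exists #|'M[F]_2|, #|[set y : 'M[F]_2 | y \in unitmx]|,
  (unit_shift_count (pid_mx 2 : 'M[F]_2)), (unit_shift_count (pid_mx 1 : 'M[F]_2)).
split; split => //.
- by move=> A B; apply: unitmx_sub_sym.
- by move=> A; rewrite /unit_graph subrr unitmxE det0 unitr0.
- by exists 0, 1%:M; rewrite /unit_graph subr0 unitmx1.
- exists 0, (pid_mx 1); rewrite /unit_graph subr0 -row_free_unit /row_free rank_pid1.
  by rewrite eq_sym -mxrank_eq0 rank_pid1.
- by move=> x; apply: card_unit_translates.
- by move=> x y /diff_neq0 nz exy; rewrite card_common_unit_translates mxrank_unit.
- move=> x y /diff_neq0 nz nexy.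
  by rewrite card_common_unit_translates mxrank2_nonunit.
Qed.
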